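(* Let $n\ge4$ be even and $\eta$ a choice function. For every $m\in\mathbb{N}$ and every pair of distinct words $w,v\in\mathcal{A}_n^m$, $\phi^\eta_w((0,1)^2)\cap\phi^\eta_v((0,1)^2)=\emptyset$ and $\phi^\eta_w((0,1)^2)\subset(0,1)^2$.
   Context: Fix an even integer $n\ge4$ and let $\mathcal{A}_n=\{1,\dots,5n-6\}$. $\mathcal{A}_n^m$ is the set of words of length $m$ over $\mathcal{A}_n$ ($\mathcal{A}_n^0=\{\varepsilon\}$), $\mathcal{A}_n^*=\bigcup_{m\ge0}\mathcal{A}_n^m$. Define maps $\psi^1_{n,j},\psi^2_{n,j}:\mathbb{R}^2\to\mathbb{R}^2$, $j\in\mathcal{A}_n$, each of the form $x\mapsto\frac1n x+b$: for $j=1,\dots,4n-4$, $\psi^1_{n,j}=\psi^2_{n,j}$ map $[0,1]^2$ onto the $4n-4$ squares of the grid of $n^2$ closed squares of side $1/n$ in $[0,1]^2$ that meet $\partial[0,1]^2$ (fixed enumeration); for $j=4n-3+i$, $i=0,\dots,\frac n2-2$, $\psi^1_{n,j}(x)=\psi^2_{n,j}(x)=\frac1nx+(\frac12+\frac in,\frac1n)$; for $j=4n+\frac n2-4+i$, $i=0,\dots,\frac n2-2$, $\psi^1_{n,j}(x)=\frac1nx+(\frac{i+1}n,\frac2n)$ and $\psi^2_{n,j}(x)=\frac1nx+(\frac{i+1}n,\frac1n)$. A choice function is any $\eta:\mathcal{A}_n^*\to\{1,2\}$. Set $\phi^\eta_\varepsilon=\mathrm{id}$ and for $w=i_1\cdots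 i_m$, $\phi^\eta_w=\psi^{\eta(\varepsilon)}_{n,i_1}\circ\psi^{\eta(i_1)}_{n,i_2}\circ\cdots\circ\psi^{\eta(i_1\cdots i_{m-1})}_{n,i_m}$. *)

From Stdlib Require Import Reals Lra Lia List Arith.
Import ListNotations.
Open Scope R_scope.

Definition point := (R * R)%type.

(* Grid square with lower-left corner (a/n, b/n), a b < n, meets the
   boundary of [0,1]^2. *)
Definition boundary_square (n : nat) (ab : nat * nat) : Prop :=
  let (a, b) := ab in
  (a < n)%nat /\ (b < n)%nat /\
  (a = 0%nat \/ b = 0%nat \/ a = (n - 1)%nat \/ b = (n - 1)%nat).

Definition boundary_enum (n : nat) (e : nat -> nat * nat) : Prop :=
  (forall j, (1 <= j <= 4 * n - 4)%nat -> boundary_square n (e j)) /\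
  (forall j j', (1 <= j <= 4 * n - 4)%nat -> (1 <= j' <= 4 * n - 4)%nat ->
      e j = e j' -> j = j') /\
  (forall ab, boundary_square n ab ->
      exists j, (1 <= j <= 4 * n - 4)%nat /\ e j = ab).

(* translation vector b of psi^k_{n,j}; k = 1 selects psi^1, otherwise psi^2 *)
Definition psi_shift (n : nat) (e : nat -> nat * nat) (k j : nat) : point :=
  if Nat.leb j (4 * n - 4) then
    (INR (fst (e j)) / INR n, INR (snd (e j)) / INR n)
  else if Nat.leb j (4 * n + n / 2 - 5) then
    let i := (j - (4 * n - 3))%nat in
    (1 / 2 + INR i / INR n, 1 / INR n)
  else
    let i := (j - (4 * n + n / 2 - 4))%nat in
    if Nat.eqb k 1 then (INR (i + 1) / INR n, 2 / INR n)
    else (INR (i + 1) / INR n, 1 / INR n).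

Definition psi (n : nat) (e : nat -> nat * nat) (k j : nat) (x : point) : point :=
  (fst x / INR n + fst (psi_shift n e k j), snd x / INR n + snd (psi_shift n e k j)).

(* phi_from pre w = psi^{eta(pre)}_{i1} o psi^{eta(pre i1)}_{i2} o ... *)
Fixpoint phi_from (n : nat) (e : nat -> nat * nat) (eta : list nat -> nat)
    (pre w : list nat) (x : point) : point :=
  match w with
  | [] => x
  | i :: w' => psi n e (eta pre) i (phi_from n e eta (pre ++ [i]) w' x)
  end.

Definition phi (n : nat) (e : nat -> nat * nat) (eta : list nat -> nat)
    (w : list nat) : point -> point := phi_from n e eta [] w.

Definition open_square (p : point) : Prop :=
  0 < fst p < 1 /\ 0 < snd p < 1.

Definition img_open (f : point -> point) (p : point) : Prop :=
  exists q, open_square q /\ f q = p.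

Definition is_word (n m : nat) (w : list nat) : Prop :=
  length w = m /\ Forall (fun i => (1 <= i <= 5 * n - 6)%nat) w.

From Stdlib Require Import Reals List Arith Lra Lia.
Import ListNotations.
Open Scope R_scope.

(* Every psi^k_{n,j} is x |-> (x + c)/n for an integer vector c with entries
   in [0, n-1], i.e. it maps (0,1)^2 onto the open grid cell with corner c/n.
   For a fixed k the letters j give pairwise distinct cells: the boundary
   letters enumerate the boundary cells, the remaining ones sit in the interior
   cells of rows 1 and 2, in disjoint column ranges.  Distinct open cells are
   disjoint and each map is injective, so by induction on the word length
   phi_w q = phi_v r with q, r in (0,1)^2 forces w = v: once the first letters
   agree, both sides feed the same prefix to eta. *)

Definition cell_map (N : nat) (c : nat * nat) (x : point) : point :=
  ((fst x + INR (fst c)) / INR N, (snd x + INR (snd c)) / INR N).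

Lemma shift_div_in_unit (N c : nat) (x : R) : (c < N)%nat -> 0 < x < 1 ->
  0 < (x + INR c) / INR N < 1.
Proof.
  intros HcN Hx.
  assert (HN : 0 < INR N) by (apply lt_0_INR; lia).
  assert (INR c + 1 <= INR N) by (rewrite <- S_INR; apply le_INR; lia).
  pose proof (pos_INR c).
  split.
  - apply Rdiv_lt_0_compat; lra.
  - apply Rmult_lt_reg_r with (INR N); [lra|].
    unfold Rdiv; rewrite Rmult_assoc, Rinv_l; lra.
Qed.

Lemma unit_shift_inj (x y : R) (c d : nat) : 0 < x < 1 -> 0 < y < 1 ->
  x + INR c = y + INR d -> c = d /\ x = y.
Proof.
  intros Hx Hy E.
  assert (c < S d)%nat by (apply INR_lt; rewrite S_INR; lra).
  assert (d < S c)%nat by (apply INR_lt; rewrite S_INR; lra).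
  assert (c = d) by lia; subst d.
  split; [reflexivity | lra].
Qed.

Lemma cell_map_open N c x : (fst c < N)%nat -> (snd c < N)%nat ->
  open_square x -> open_square (cell_map N c x).
Proof.
  intros Ha Hb [Hx Hy]; split; apply shift_div_in_unit; assumption.
Qed.

Lemma cell_map_inj N c d x y : (0 < N)%nat -> open_square x -> open_square y ->
  cell_map N c x = cell_map N d y -> c = d /\ x = y.
Proof.
  intros HN [Hx1 Hx2] [Hy1 Hy2] E.
  assert (HN' : INR N <> 0) by (apply not_0_INR; lia).
  destruct c as [c1 c2], d as [d1 d2], x as [x1 x2], y as [y1 y2].
  injection E as E1 E2; cbn in *.
  apply Rmult_eq_reg_r in E1, E2; try now apply Rinv_neq_0_compat.
  destruct (unit_shift_inj x1 y1 c1 d1) as [-> ->]; auto.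
  destruct (unit_shift_inj x2 y2 c2 d2) as [-> ->]; auto.
Qed.

(* psi^k_{n,j} maps [0,1]^2 onto the grid square with lower-left corner
   (a/n, b/n), where (a, b) = cell n e k j. *)
Definition cell (n : nat) (e : nat -> nat * nat) (k j : nat) : nat * nat :=
  if Nat.leb j (4 * n - 4) then e j
  else if Nat.leb j (4 * n + n / 2 - 5) then ((n / 2 + (j - (4 * n - 3)))%nat, 1%nat)
  else ((j - (4 * n + n / 2 - 4) + 1)%nat, if Nat.eqb k 1 then 2%nat else 1%nat).

Definition is_letter (n j : nat) : Prop := (1 <= j <= 5 * n - 6)%nat.

Section GridMaps.

Variables (n : nat) (e : nat -> nat * nat).
Hypotheses (n_ge4 : (4 <= n)%nat) (n_even : Nat.Even n) (e_enum : boundary_enum n e).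

Lemma even_half : n = (2 * (n / 2))%nat.
Proof.
  rewrite <- Nat.div2_div, <- Nat.double_twice. exact (Nat.Even_double n n_even).
Qed.

Lemma psi_cell_map k j x : psi n e k j x = cell_map n (cell n e k j) x.
Proof.
  assert (HN : INR n <> 0) by (apply not_0_INR; lia).
  assert (Ehalf : 1 / 2 = INR (n / 2) / INR n).
  { rewrite even_half at 2. rewrite mult_INR. cbn [INR]. field.
    apply not_0_INR. pose proof even_half. lia. }
  unfold psi, psi_shift, cell_map, cell.
  destruct (Nat.leb j (4 * n - 4)); [|destruct (Nat.leb j (4 * n + n / 2 - 5))];
    [| | destruct (Nat.eqb k 1)]; cbn [fst snd]; f_equal;
    rewrite ?Ehalf, ?plus_INR; cbn [INR]; field; assumption.
Qed.

Lemma cell_interior k j : (4 * n - 4 < j)%nat -> is_letter n j ->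
  (1 <= fst (cell n e k j) <= n - 2)%nat /\ (1 <= snd (cell n e k j) <= 2)%nat.
Proof.
  intros Hj [_ Hj']. pose proof even_half. unfold cell.
  destruct (Nat.leb_spec j (4 * n - 4)); [lia|].
  destruct (Nat.leb_spec j (4 * n + n / 2 - 5)); [|destruct (Nat.eqb k 1)];
    cbn [fst snd]; lia.
Qed.

(* The two interior families occupy the columns n/2 .. n-2 and 1 .. n/2-1. *)
Lemma cell_interior_inj k j j' : (4 * n - 4 < j)%nat -> (4 * n - 4 < j')%nat ->
  is_letter n j -> is_letter n j' -> cell n e k j = cell n e k j' -> j = j'.
Proof.
  intros Hj Hj' [_ Hjn] [_ Hjn']. pose proof even_half. unfold cell.
  destruct (Nat.leb_spec j (4 * n - 4)); [lia|].
  destruct (Nat.leb_spec j' (4 * n - 4)); [lia|].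
  destruct (Nat.leb_spec j (4 * n + n / 2 - 5));
    destruct (Nat.leb_spec j' (4 * n + n / 2 - 5));
    destruct (Nat.eqb k 1); intros [E1 E2]%pair_equal_spec; lia.
Qed.

Lemma cell_boundary k j : (j <= 4 * n - 4)%nat -> cell n e k j = e j.
Proof. intros Hj. unfold cell. now rewrite (proj2 (Nat.leb_le _ _) Hj). Qed.

Lemma cell_interior_not_boundary k j : (4 * n - 4 < j)%nat -> is_letter n j ->
  ~ boundary_square n (cell n e k j).
Proof.
  intros Hj Hl. pose proof (cell_interior k j Hj Hl).
  destruct (cell n e k j); unfold boundary_square; cbn in *; lia.
Qed.

Lemma cell_lt k j : is_letter n j ->
  (fst (cell n e k j) < n)%nat /\ (snd (cell n e k j) < n)%nat.
Proof.
  intros Hj. destruct (Nat.le_gt_cases j (4 * n - 4)) as [Hb | Hi].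
  - destruct e_enum as [Hsq _].
    specialize (Hsq j ltac:(unfold is_letter in Hj; lia)).
    rewrite cell_boundary by assumption.
    destruct (e j); unfold boundary_square in Hsq; cbn; lia.
  - pose proof (cell_interior k j Hi Hj); lia.
Qed.

Lemma cell_inj k j j' : is_letter n j -> is_letter n j' ->
  cell n e k j = cell n e k j' -> j = j'.
Proof.
  destruct e_enum as [Hsq [He _]].
  intros Hj Hj' E.
  destruct (Nat.le_gt_cases j (4 * n - 4)) as [Hb | Hi];
    destruct (Nat.le_gt_cases j' (4 * n - 4)) as [Hb' | Hi'];
    unfold is_letter in Hj, Hj'.
  - rewrite !cell_boundary in E by assumption. apply He; lia || assumption.
  - exfalso. apply (cell_interior_not_boundary k j' Hi' Hj').
    rewrite <- E, cell_boundary by assumption. apply Hsq; lia.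
  - exfalso. apply (cell_interior_not_boundary k j Hi Hj).
    rewrite E, cell_boundary by assumption. apply Hsq; lia.
  - exact (cell_interior_inj k j j' Hi Hi' Hj Hj' E).
Qed.

Lemma psi_open k j q : is_letter n j -> open_square q -> open_square (psi n e k j q).
Proof.
  intros Hj Hq. rewrite psi_cell_map.
  destruct (cell_lt k j Hj). apply cell_map_open; assumption.
Qed.

Lemma psi_inj k j j' q r : is_letter n j -> is_letter n j' ->
  open_square q -> open_square r -> psi n e k j q = psi n e k j' r -> j = j' /\ q = r.
Proof.
  intros Hj Hj' Hq Hr E. rewrite !psi_cell_map in E.
  destruct (cell_map_inj n _ _ q r ltac:(lia) Hq Hr E) as [Ec ->].
  split; [exact (cell_inj k j j' Hj Hj' Ec) | reflexivity].
Qed.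

Variable eta : list nat -> nat.

Lemma phi_from_open pre w q : Forall (is_letter n) w -> open_square q ->
  open_square (phi_from n e eta pre w q).
Proof.
  intros Hw; revert pre q; induction Hw; intros pre q Hq; cbn; auto using psi_open.
Qed.

Lemma phi_from_inj pre w v q r : Forall (is_letter n) w -> Forall (is_letter n) v ->
  length w = length v -> open_square q -> open_square r ->
  phi_from n e eta pre w q = phi_from n e eta pre v r -> w = v.
Proof.
  intros Hw; revert pre v.
  induction Hw as [|i w Hi Hw IH]; intros pre [|j v] Hv Hl Hq Hr E;
    try discriminate; [reflexivity|].
  inversion Hv as [|? ? Hj Hv']; subst. cbn in E.
  destruct (psi_inj _ i j _ _ Hi Hj (phi_from_open _ _ _ Hw Hq)
              (phi_from_open _ _ _ Hv' Hr) E) as [<- E'].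
  f_equal. eapply IH; eauto.
Qed.

End GridMaps.

Theorem lemma4p2 (n : nat) (e : nat -> nat * nat) (eta : list nat -> nat) :
  (4 <= n)%nat -> Nat.Even n -> boundary_enum n e ->
  (forall u, eta u = 1%nat \/ eta u = 2%nat) ->
  forall (m : nat) (w v : list nat),
    is_word n m w -> is_word n m v -> w <> v ->
    (~ exists p, img_open (phi n e eta w) p /\ img_open (phi n e eta v) p) /\
    (forall p, img_open (phi n e eta w) p -> open_square p).
Proof.
  (* psi_shift reads every k <> 1 as 2. *)
  intros n_ge4 n_even e_enum _ m w v [Hlw Hw] [Hlv Hv] Hne. split.
  - intros [p [[q [Hq Eq]] [r [Hr Er]]]].
    apply Hne, (phi_from_inj n e n_ge4 n_even e_enum eta [] w v q r); auto.
    + congruence.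
    + unfold phi in *; congruence.
  - intros p [q [Hq <-]]. exact (phi_from_open n e n_ge4 n_even e_enum eta [] w q Hw Hq).
Qed.
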